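(* Let $(\Omega,\mathcal F,\mathcal P)$ be pre-Hahn-localizable with $\mathcal P$ convex, and let $\mathcal Q$ and $\mathcal Q'$ be two localizations with corresponding pairwise disjoint support sets $\{S_Q:Q\in\mathcal Q\}$ and $\{T_{Q'}:Q'\in\mathcal Q'\}$. Then $(\mathcal H_{\mathcal F}^{\mathcal Q})^{\mathcal P}=(\mathcal H_{\mathcal F}^{\mathcal Q'})^{\mathcal P}$, where the measures of $\mathcal P$ are extended to the Hahn-extensions in the canonical way.
   Context: $\mathcal P$ is a family of probability measures on $\mathcal F$. $\mathcal P\lll\mathcal Q$ means each $P\in\mathcal P$ is absolutely continuous w.r.t. some $Q\in\mathcal Q$; $\mathrm{sconv}(\mathcal Q)$ denotes countable convex combinations. A localization of $\mathcal P$ is a family $\mathcal Q$ of probability measures on $\mathcal F$ together with support sets $S_Q\in\mathcal F$ such that $Q(S_R)=\delta_{QR}$ for $Q,R\in\mathcal Q$ and $\mathcal Q\lll\mathcal P\lll\mathrm{sconv}(\mathcal Q)$; $\mathcal P$ is pre-Hahn-localizable if a localization exists. The Hahn-extension is $\mathcal H_{\mathcal F}^{\mathcal Q}=\sigma\big(\mathcal F\cup\{\bigcup_{Q\in\mathcal Q}E_Q:E_Q\in\mathcal F,E_Q\subseteq S_Q\}\big)$; each $P\in\mathcal P$ extends to $\mathcal H_{\mathcal F}^{\mathcal Q}$ by $P^{\mathcal Q}(A)=\sum_{Q\in\mathcal Q(P)}P(A\cap S_Q)$, where $\mathcal Q(P)=\{Q\in\mathcal Q:P(S_Q)>0\}$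 is countable. For a σ-algebra $\mathcal G$ carrying the measures of $\mathcal P$, $\mathcal G^{\mathcal P}=\bigcap_{P\in\mathcal P}\{G\cup Z:G\in\mathcal G, Z\subseteq N\in\mathcal G, P(N)=0\}$. *)

(* Measures are represented as
   functions [set Omega -> \bar R]; only their values on the relevant
   sigma-algebra matter. *)
From mathcomp Require Import all_boot all_order all_algebra.
From mathcomp Require Import all_classical all_reals.
From mathcomp Require Import ereal sequences esum measurable_structure.
Set Implicit Arguments. Unset Strict Implicit. Unset Printing Implicit Defensive.
Import Order.TTheory GRing.Theory Num.Theory.
Local Open Scope classical_set_scope.
Local Open Scope ring_scope.
Local Open Scope ereal_scope.

Definition meas (Omega : Type) (R : realType) := set Omega -> \bar R.

Section Defs.
Context {Omega : Type} {R : realType}.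
Implicit Types (F G : set (set Omega)) (P Q M : meas Omega R)
  (PP QQ : set (meas Omega R)).

Definition is_prob F P :=
  [/\ P set0 = 0, (forall A, F A -> 0 <= P A), P setT = 1 &
     (forall A : (set Omega)^nat, (forall n, F (A n)) -> trivIset setT A ->
        (fun n => \sum_(0 <= i < n) P (A i)) @ \oo --> P (\bigcup_n A n))].

Definition abscont F P Q := forall A, F A -> Q A = 0 -> P A = 0.

Definition fam_abscont F PP QQ :=
  forall P, PP P -> exists Q, QQ Q /\ abscont F P Q.

Definition sconv F QQ : set (meas Omega R) := fun M =>
  exists (q : nat -> meas Omega R) (w : nat -> R),
    [/\ (forall n, QQ (q n)), (forall n, (0 <= w n)%R),
        \sum_(n <oo) (w n)%:E = 1 &
        forall A, F A -> M A = \sum_(n <oo) ((w n)%:E * q n A)].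

Definition fam_convex F PP :=
  forall P1 P2 (t : R), PP P1 -> PP P2 -> (0 <= t <= 1)%R ->
    exists P, PP P /\
      forall A, F A -> P A = (t%:E * P1 A + (1 - t)%:E * P2 A).

Definition localization F PP QQ (S : meas Omega R -> set Omega) :=
  [/\ (forall Q, QQ Q -> is_prob F Q),
      (forall Q, QQ Q -> F (S Q)),
      (forall Q Q', QQ Q -> QQ Q' -> Q (S Q') = (if `[< Q = Q' >] then 1 else 0)),
      fam_abscont F QQ PP &
      fam_abscont F PP (sconv F QQ)].

Definition pre_Hahn_localizable F PP :=
  exists QQ S, localization F PP QQ S.

Definition Hahn_ext F QQ (S : meas Omega R -> set Omega) : set (set Omega) :=
  smallest (sigma_algebra setT)
    (F `|` [set A | exists E : meas Omega R -> set Omega,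
              (forall Q, QQ Q -> F (E Q) /\ E Q `<=` S Q) /\
              A = \bigcup_(Q in QQ) E Q]).

Definition ext_meas QQ (S : meas Omega R -> set Omega) P : meas Omega R :=
  fun A => \esum_(Q in [set Q | QQ Q /\ 0 < P (S Q)]) P (A `&` S Q).

Definition fam_completion G (ext : meas Omega R -> meas Omega R) PP
  : set (set Omega) :=
  [set A | forall P, PP P -> exists (G0 Z N : set Omega),
     [/\ G G0, G N, Z `<=` N, ext P N = 0 & A = G0 `|` Z]].

End Defs.

From mathcomp Require Import all_boot all_order all_algebra.
From mathcomp Require Import all_classical all_reals.
From mathcomp Require Import ereal sequences esum measurable_structure.
From mathcomp Require Import normedtype.
Set Implicit Arguments. Unset Strict Implicit. Unset Printing Implicit Defensive.
Import Order.TTheory.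
Local Open Scope classical_set_scope.
Local Open Scope ereal_scope.

(* Each P in PP is absolutely continuous with respect to a countable convex
   combination of members of QQ, hence P is carried by the union D of
   countably many supports S_Q.  A set of the Hahn-extension meets each S_Q,
   hence D, in a set of F, and a P^QQ-null set meets D in a P-null set of F.
   So the P-completion of the Hahn-extension is the P-completion of F, for
   every localization. *)

Section sigma_algebra_closure.
Variables (T : Type) (F : set (set T)).
Hypothesis HF : sigma_algebra setT F.

Lemma sigma_algebra_set0 : F set0.
Proof. by case: HF. Qed.

Lemma sigma_algebra_setC A : F A -> F (~` A).
Proof. by case: HF => _ FC _ /FC; rewrite setTD. Qed.

Lemma sigma_algebra_setT : F setT.
Proof.
by rewrite -setC0; apply: sigma_algebra_setC; exact: sigma_algebra_set0.
Qed.

Lemma sigma_algebra_bigcupT (A : (set T)^nat) :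
  (forall n, F (A n)) -> F (\bigcup_n A n).
Proof. by case: HF => _ _; apply. Qed.

Lemma sigma_algebra_setI : setI_closed F.
Proof. by have [] := (sigma_algebraP (fun _ _ => @subsetT _ _)).1 HF. Qed.

Lemma sigma_algebra_setU A B : F A -> F B -> F (A `|` B).
Proof.
move=> FA FB; rewrite -(setCK (A `|` B)) setCU.
by apply/sigma_algebra_setC/sigma_algebra_setI; exact: sigma_algebra_setC.
Qed.

Lemma sigma_algebra_setD A B : F A -> F B -> F (A `\` B).
Proof.
by move=> FA FB; apply: sigma_algebra_setI => //; exact: sigma_algebra_setC.
Qed.

Lemma sigma_algebra_bigsetU (A : (set T)^nat) n :
  (forall k, F (A k)) -> F (\big[setU/set0]_(k < n) A k).
Proof.
move=> FA; elim: n => [|n IHn].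
  by rewrite big_ord0; exact: sigma_algebra_set0.
by rewrite big_ord_recr; exact: sigma_algebra_setU.
Qed.

End sigma_algebra_closure.

Section probability.
Variables (Omega : Type) (R : realType) (F : set (set Omega)) (P : meas Omega R).
Hypotheses (HF : sigma_algebra setT F) (HP : is_prob F P).

Lemma prob_ge0 A : F A -> 0 <= P A.
Proof. by case: HP => _ + _ _; apply. Qed.

Lemma probU A B : F A -> F B -> A `&` B = set0 -> P (A `|` B) = P A + P B.
Proof.
move=> FA FB AB0; have [P0 _ _ Psigma] := HP.
have FAB n : F (bigcup2 A B n).
  by case: n => [|[|n]] //=; exact: sigma_algebra_set0.
have := Psigma _ FAB; rewrite -trivIset_bigcup2 bigcup2E => /(_ AB0) cvgP.
apply: (cvg_unique (@ereal_hausdorff R) cvgP); apply: cvg_near_cst; near=> n.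
have n2 : (2 <= n)%N by near: n; exists 2%N.
rewrite (big_cat_nat _ n2) //= [X in _ + X]big1_seq; last first.
  by move=> [|[|i]] /andP[_]; rewrite mem_index_iota //= => _; exact: P0.
by rewrite !big_nat_recr //= big_geq // add0e adde0.
Unshelve. all: by end_near.
Qed.

Lemma le_prob A B : F A -> F B -> A `<=` B -> P A <= P B.
Proof.
move=> FA FB AB; have FBA := sigma_algebra_setD HF FB FA.
rewrite -(setDUK AB) probU //; first by rewrite leeDl // prob_ge0.
by rewrite setDE setICA setICr setI0.
Qed.

Lemma subset_prob_eq0 A B : F A -> F B -> A `<=` B -> P B = 0 -> P A = 0.
Proof.
by move=> FA FB AB PB0; apply/le_anti; rewrite prob_ge0 // andbT -PB0 le_prob.
Qed.

Lemma prob_setC_eq0 A : F A -> P A = 1 -> P (~` A) = 0.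
Proof.
move=> FA PA1; have FAC := sigma_algebra_setC HF FA.
have [_ _ PT1 _] := HP.
have finAC : P (~` A) \is a fin_num.
  rewrite ge0_fin_numE ?prob_ge0 //.
  apply: (le_lt_trans (le_prob FAC (sigma_algebra_setT HF) (@subsetT _ _))).
  by rewrite PT1 ltry.
have := probU FA FAC (setICr A); rewrite setUCr PA1 PT1.
by move/(congr1 (fun x => x - 1)); rewrite subee // addeAC subee // add0e.
Qed.

Lemma prob_bigcup_eq0 (A : (set Omega)^nat) : (forall n, F (A n)) ->
  (forall n, P (A n) = 0) -> P (\bigcup_n A n) = 0.
Proof.
move=> FA PA0; have [_ _ _ Psigma] := HP.
have FDU n : F (seqDU A n).
  by apply: (sigma_algebra_setD HF) => //; exact: (sigma_algebra_bigsetU HF).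
have PDU0 n : P (seqDU A n) = 0.
  exact: subset_prob_eq0 (FDU n) (FA n) (@subset_seqDU _ A n) (PA0 n).
rewrite seqDU_bigcup_eq.
apply: (cvg_unique (@ereal_hausdorff R) (Psigma _ FDU (trivIset_seqDU A))).
by apply: cvg_near_cst; near=> n; rewrite big1 // => i _.
Unshelve. all: by end_near.
Qed.

End probability.

Section extended_measure.
Variables (Omega : Type) (R : realType) (F : set (set Omega)).
Variables (QQ : set (meas Omega R)) (S : meas Omega R -> set Omega).
Variable P : meas Omega R.
Hypotheses (HF : sigma_algebra setT F) (FS : forall Q, QQ Q -> F (S Q)).
Hypothesis HP : is_prob F P.

Lemma ext_meas_eq0 N Q : QQ Q -> F (N `&` S Q) ->
  ext_meas QQ S P N = 0 -> P (N `&` S Q) = 0.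
Proof.
move=> QQQ FNS extN0; apply/le_anti; rewrite (prob_ge0 HP FNS) andbT.
have [PSpos|PSnpos] := ltP 0 (P (S Q)).
  rewrite -extN0; apply: esum_ge; exists [set Q]; last by rewrite fsbig_set1.
  by split; [exact: finite_set1|move=> _ ->].
exact: le_trans (le_prob HF HP FNS (FS QQQ) (@subIsetr _ _ _)) PSnpos.
Qed.

Lemma ext_meas_null N : F N -> P N = 0 -> ext_meas QQ S P N = 0.
Proof.
move=> FN PN0; apply: esum1 => Q [QQQ _].
have FNS : F (N `&` S Q) by apply: sigma_algebra_setI => //; exact: FS.
by rewrite (subset_prob_eq0 HF HP FNS FN (@subIsetl _ _ _) PN0).
Qed.

End extended_measure.

Lemma localization_concentrated (Omega : Type) (R : realType)
    (F : set (set Omega)) (PP QQ : set (meas Omega R))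
    (S : meas Omega R -> set Omega) (P : meas Omega R) :
  sigma_algebra setT F -> localization F PP QQ S -> PP P ->
  exists2 q : nat -> meas Omega R,
    (forall n, QQ (q n)) & P (~` \bigcup_n S (q n)) = 0.
Proof.
move=> HF [QQprob FS S_delta _ PP_sconv] PPP.
have [M [[q [w [QQq _ _ Meq]]] PM]] := PP_sconv P PPP.
exists q => //; set D := \bigcup_n S (q n).
have FD : F D by apply: sigma_algebra_bigcupT => // n; exact: FS.
have FDC := sigma_algebra_setC HF FD.
apply: PM => //; rewrite Meq //; apply: eseries0 => n _ _.
suff -> : q n (~` D) = 0 by rewrite mule0.
have probq := QQprob _ (QQq n); have FSq := FS _ (QQq n).
apply: (subset_prob_eq0 HF probq FDC (sigma_algebra_setC HF FSq)).
  by apply: subsetC => x Sx; exists n.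
by apply: (prob_setC_eq0 HF probq FSq); rewrite S_delta // asboolT.
Qed.

Section Hahn_extension.
Variables (Omega : Type) (R : realType) (F : set (set Omega)).
Variables (QQ : set (meas Omega R)) (S : meas Omega R -> set Omega).
Hypotheses (HF : sigma_algebra setT F) (FS : forall Q, QQ Q -> F (S Q)).

Lemma sub_Hahn_ext : F `<=` Hahn_ext F QQ S.
Proof. by move=> A FA; apply: sub_sigma_algebra; left. Qed.

Hypothesis S_disj : forall Q Q', QQ Q -> QQ Q' -> Q <> Q' -> S Q `&` S Q' = set0.

Lemma Hahn_ext_setI A Q : Hahn_ext F QQ S A -> QQ Q -> F (A `&` S Q).
Proof.
move=> HA QQQ; apply: (HA [set B | F (B `&` S Q)]); split.
- split => [|B FBS|B FBS] /=.
  + by rewrite set0I; exact: sigma_algebra_set0.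
  + rewrite setTD (_ : ~` B `&` S Q = S Q `\` (B `&` S Q)); last first.
      by rewrite setDIr setDv setU0 setDE setIC.
    by apply: sigma_algebra_setD => //; exact: FS.
  + by rewrite setI_bigcupl; exact: sigma_algebra_bigcupT.
- move=> B /= [FB|[E [FE ->]]].
    by apply: sigma_algebra_setI => //; exact: FS.
  suff -> : \bigcup_(Q0 in QQ) E Q0 `&` S Q = E Q by case: (FE Q QQQ).
  apply/seteqP; split=> [x [[Q0 QQ0 EQ0x] SQx]|x EQx]; last first.
    by split; [exists Q|exact: (FE Q QQQ).2].
  have [<-//|neQ] := pselect (Q0 = Q).
  have : (S Q0 `&` S Q) x by split => //; exact: (FE Q0 QQ0).2.
  by rewrite S_disj.
Qed.

Lemma Hahn_ext_setI_bigcup A (q : nat -> meas Omega R) :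
  Hahn_ext F QQ S A -> (forall n, QQ (q n)) -> F (A `&` \bigcup_n S (q n)).
Proof.
move=> HA QQq; rewrite setI_bigcupr; apply: sigma_algebra_bigcupT => // n.
exact: Hahn_ext_setI.
Qed.

Lemma Hahn_ext_witness_in_F (P : meas Omega R) (q : nat -> meas Omega R)
    (G0 Z N : set Omega) :
  is_prob F P -> (forall n, QQ (q n)) -> P (~` \bigcup_n S (q n)) = 0 ->
  Hahn_ext F QQ S G0 -> Hahn_ext F QQ S N -> Z `<=` N -> ext_meas QQ S P N = 0 ->
  exists (G0' Z' N' : set Omega),
    [/\ F G0', F N', Z' `<=` N', P N' = 0 & G0 `|` Z = G0' `|` Z'].
Proof.
move=> HP QQq PDC0 HG0 HN ZN extN0; set D := \bigcup_n S (q n).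
have FDC : F (~` D).
  by apply/(sigma_algebra_setC HF)/(sigma_algebra_bigcupT HF) => n; exact: FS.
have FND : F (N `&` D) by exact: Hahn_ext_setI_bigcup.
have PND0 : P (N `&` D) = 0.
  rewrite setI_bigcupr; apply: (prob_bigcup_eq0 HF HP) => // n.
    exact: Hahn_ext_setI.
  by apply: (ext_meas_eq0 HF FS HP (QQq n)) => //; exact: Hahn_ext_setI.
exists (G0 `&` D), ((G0 `|` Z) `\` (G0 `&` D)), (~` D `|` (N `&` D)); split.
- exact: Hahn_ext_setI_bigcup.
- exact: sigma_algebra_setU.
- move=> x [[G0x|Zx] nG0Dx]; have [Dx|nDx] := pselect (D x); try by left.
    by exfalso; apply: nG0Dx.
  by right; split => //; exact: ZN.
- by rewrite (probU HF HP FDC FND) ?PDC0 ?PND0 ?adde0 // setICA setICl setI0.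
- by rewrite setDUK // => x [G0x _]; left.
Qed.

End Hahn_extension.

Lemma fam_completion_Hahn_ext (Omega : Type) (R : realType)
    (F : set (set Omega)) (PP QQ : set (meas Omega R))
    (S : meas Omega R -> set Omega) :
  sigma_algebra setT F -> (forall P, PP P -> is_prob F P) ->
  localization F PP QQ S ->
  (forall Q Q', QQ Q -> QQ Q' -> Q <> Q' -> S Q `&` S Q' = set0) ->
  fam_completion (Hahn_ext F QQ S) (ext_meas QQ S) PP = fam_completion F id PP.
Proof.
move=> HF PPprob loc S_disj; have [_ FS _ _ _] := loc.
apply/seteqP; split=> A complA P PPP.
all: have [G0 [Z [N [G0G NG ZN N0 ->]]]] := complA P PPP.
  have [q QQq PDC0] := localization_concentrated HF loc PPP.
  exact (Hahn_ext_witness_in_F HF FS S_disj (PPprob P PPP) QQq PDC0 G0G NG ZN N0).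
exists G0, Z, N; split => //; try exact: sub_Hahn_ext.
by rewrite (ext_meas_null HF FS (PPprob P PPP) NG N0).
Qed.

Theorem corollary4p8 (R : realType) (Omega : Type)
  (F : set (set Omega)) (PP : set (meas Omega R))
  (QQ QQ' : set (meas Omega R)) (S T : meas Omega R -> set Omega) :
  sigma_algebra setT F ->
  (forall P, PP P -> is_prob F P) ->
  pre_Hahn_localizable F PP ->
  fam_convex F PP ->
  localization F PP QQ S ->
  (forall Q Q', QQ Q -> QQ Q' -> Q <> Q' -> S Q `&` S Q' = set0) ->
  localization F PP QQ' T ->
  (forall Q Q', QQ' Q -> QQ' Q' -> Q <> Q' -> T Q `&` T Q' = set0) ->
  fam_completion (Hahn_ext F QQ S) (ext_meas QQ S) PP =
  fam_completion (Hahn_ext F QQ' T) (ext_meas QQ' T) PP.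
Proof.
move=> HF PPprob _ _ locS S_disj locT T_disj.
by rewrite (fam_completion_Hahn_ext HF PPprob locS S_disj)
  (fam_completion_Hahn_ext HF PPprob locT T_disj).
Qed.
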